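(* Fix $\delta\in(0,1/2)$ and let $s=s(n)=\lfloor(1/2-\delta)n\rfloor$. Let $k=k(n)$ and $m=m(n)$ satisfy $k=o(\sqrt n)$ and $(1/2+\delta)^k m/n\to\infty$. Let $C_1,\dots,C_m$ be independent uniformly random $k$-clauses on the variables $x_1,\dots,x_n$. Then for every fixed $\zeta>0$, $$\Pr\Big(\big|m_S-(1/2+\delta)^k m\big|\le \zeta (1/2+\delta)^k m\ \text{ for all } S\subseteq[n] \text{ with } |S|=s\Big)\to 1 \quad (n\to\infty).$$
   Context: A uniformly random $k$-clause on $x_1,\dots,x_n$ is obtained by choosing a $k$-subset $K\subseteq[n]$ (its support) uniformly at random and a vector $g\in\{0,1\}^K$ uniformly at random; the clause is the Boolean function $C(x)=1$ iff $x_j=g_j$ for some $j\in K$ (an OR of $k$ literals on $k$ distinct variables). A clause $C_i$ misses $S\subseteq[n]$ if its support is contained in $[n]\setminus S$. For $S\subseteq[n]$, $m_S=|\{i\in[m]: C_i \text{ misses } S\}|$. *)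

From Stdlib Require Import Reals.
From mathcomp Require Import all_boot.
Set Implicit Arguments. Unset Strict Implicit. Unset Printing Implicit Defensive.

(* A clause on x_1..x_n (indexed by 'I_n): support K and sign vector g.
   g is a full function 'I_n -> bool; only its restriction to K matters. *)
Definition clause (n : nat) : finType := ({set 'I_n} * {ffun 'I_n -> bool})%type.

Definition clause_eval n (C : clause n) (x : {ffun 'I_n -> bool}) : bool :=
  [exists j in C.1, x j == C.2 j].

Definition outcome (n m : nat) : finType := {ffun 'I_m -> clause n}.

(* Uniform measure on valid
   outcomes = m independent uniform k-clauses (each k-clause on support K is
   represented by exactly 2^(n-k) values of g, uniformly). *)
Definition valid (n m k : nat) (w : outcome n m) : bool :=
  [forall i, #|(w i).1| == k].

Definition misses n (C : clause n) (S : {set 'I_n}) : bool := C.1 \subset ~: S.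

Definition mS n m (w : outcome n m) (S : {set 'I_n}) : nat :=
  #|[set i : 'I_m | misses (w i) S]|.

Definition Rleb (x y : R) : bool := if Rle_dec x y then true else false.

Definition Rprob (n m k : nat) (E : pred (outcome n m)) : R :=
  Rdiv (INR #|[set w : outcome n m | valid k w && E w]|)
       (INR #|[set w : outcome n m | valid k w]|).

Definition sfun (delta : R) (n : nat) : nat :=
  Z.to_nat (Int_part (Rmult (Rminus (Rdiv 1 2) delta) (INR n))).

Definition good_event (n m k s : nat) (p zeta : R) : pred (outcome n m) :=
  fun w => [forall S : {set 'I_n}, (#|S| == s) ==>
     Rleb (Rabs (Rminus (INR (mS w S)) (Rmult (pow p k) (INR m))))
          (Rmult zeta (Rmult (pow p k) (INR m)))].

Arguments Rprob : clear implicits.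
Arguments good_event : clear implicits.

(* For a fixed S with |S| = s, m_S counts m independent events, each of
   probability q = C(n-s,k)/C(n,k) ([miss_prob]).  Its exponential moment is
   computed exactly by counting ([mgf_mS]), which yields Chernoff bounds:
   each of m_S >= (1+eta) q m and m_S <= (1-eta) q m has probability at
   most exp(-eta^2 q m / 6) ([upper_tail], [lower_tail]).  A union bound
   over the at most 2^n sets S handles all of them at once
   ([bad_event_bound]).  Since n - s ~ p n and k = o(sqrt n), q is within a
   factor 1 +- eta of p^k ([miss_prob_lower], [miss_prob_upper]); for a
   single n this gives the failure bound 2^(n+1) exp(-c p^k m)
   ([deviation_bound]), with eta = min(zeta,1)/3 and c = eta^2 (1-eta)/6.
   Finally p^k m / n -> +oo makes this bound vanish ([exp_bound_vanishes]). *)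

From Pilot Require Import Defs.
From Stdlib Require Import Reals Lra Lia ZArith.
From mathcomp Require Import all_boot all_order all_algebra.
From mathcomp Require Import Rstruct.
Import Order.TTheory GRing.Theory Num.Theory.
Open Scope R_scope.

Section ExactCounts.
Local Open Scope ring_scope.

Lemma sum_pow_count (T : finType) (V A : pred T) (m : nat) (lam : R) :
  \sum_(w : {ffun 'I_m -> T} | [forall i, V (w i)]) lam ^+ #|[set i | A (w i)]|
  = (\sum_(c | V c) (if A c then lam else 1)) ^+ m.
Proof.
rewrite big_mkcond /=.
have -> : (\sum_(c | V c) (if A c then lam else 1)) ^+ m =
   \prod_(i < m) \sum_c (if V c then (if A c then lam else 1) else 0).
  by rewrite -big_mkcond /= prodr_const card_ord.
rewrite bigA_distr_bigA /=; apply: eq_bigr => w _.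
case: forallP => [allV|nV].
  rewrite (eq_bigr (fun i => if A (w i) then lam else 1)); last first.
    by move=> i _; rewrite allV.
  by rewrite -big_mkcond /= prodr_const cardsE.
have [i Vi] : exists i, ~~ V (w i).
  by apply/existsP; rewrite -negb_forall; apply/negP => /forallP.
by rewrite (bigD1 i) //= (negbTE Vi) mul0r.
Qed.

Lemma sum_weight_split (T : finType) (V A : pred T) (lam : R) :
  \sum_(c | V c) (if A c then lam else 1) =
  #|[pred c | V c]|%:R + #|[pred c | V c && A c]|%:R * (lam - 1).
Proof.
rewrite (eq_bigr (fun c => 1 + (if A c then lam - 1 else 0))); last first.
  by move=> c _; case: (A c); rewrite ?addr0 // addrC subrK.
rewrite big_split /= sumr_const -big_mkcondr /= sumr_const mulr_natl.
by rewrite -mulr_natl mulrC.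
Qed.

Lemma markov_count (U : finType) (D E : pred U) (f : U -> R) (c : R) :
  (forall w, D w -> 0 <= f w) -> (forall w, D w -> E w -> c <= f w) ->
  #|[set w | D w && E w]|%:R * c <= \sum_(w | D w) f w.
Proof.
move=> f0 fc; have [c0|c0] := leP c 0.
  by apply: le_trans (sumr_ge0 _ f0); rewrite mulr_ge0_le0 // ler0n.
have -> : #|[set w | D w && E w]|%:R * c = \sum_(w | D w && E w) c.
  by rewrite sumr_const cardsE mulr_natl.
rewrite [X in _ <= X](bigID E) /= -[X in X <= _]addr0 lerD //.
  by apply: ler_sum => w /andP[Dw Ew]; exact: fc.
by apply: sumr_ge0 => w /andP[] /f0.
Qed.

End ExactCounts.

Lemma card_clauses_with_support {n} (P : pred {set 'I_n}) :
  #|[set c : clause n | P c.1]| = (#|[set K | P K]| * 2 ^ n)%N.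
Proof.
have -> : [set c : clause n | P c.1] = setX [set K | P K] [set: {ffun 'I_n -> bool}].
  by apply/setP => -[K g]; rewrite !inE andbT.
by rewrite cardsX cardsT card_ffun card_bool card_ord.
Qed.

Lemma card_kclauses n k :
  #|[set c : clause n | #|c.1| == k]| = ('C(n, k) * 2 ^ n)%N.
Proof.
by rewrite (card_clauses_with_support (fun K => #|K| == k)) card_draws card_ord.
Qed.

Lemma card_kclauses_missing n k (S : {set 'I_n}) :
  #|[set c : clause n | (#|c.1| == k) && misses c S]| = ('C(n - #|S|, k) * 2 ^ n)%N.
Proof.
rewrite (card_clauses_with_support (fun K => (#|K| == k) && (K \subset ~: S))).
rewrite (eq_card (B := [set K : {set 'I_n} | K \subset ~: S & #|K| == k])).
  by rewrite cards_draws cardsCs setCK card_ord.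
by move=> K; rewrite !inE andbC.
Qed.

Lemma card_valid n m k :
  #|[set w : outcome n m | valid k w]| = (('C(n, k) * 2 ^ n) ^ m)%N.
Proof.
rewrite -card_kclauses -[X in (_ ^ X)%N]card_ord -card_ffun_on.
apply: eq_card => w; rewrite inE; apply/forallP/ffun_onP => H i.
  by rewrite inE; apply: H.
by have := H i; rewrite inE.
Qed.

(* Probability that a uniformly random k-clause misses a fixed set of
   s variables, i.e. that its support avoids it. *)
Definition miss_prob (n k s : nat) : R := INR 'C(n - s, k) / INR 'C(n, k).

Lemma miss_prob_bounds n k s : (k <= n)%N -> 0 <= miss_prob n k s <= 1.
Proof.
move=> kn; have C0 : 0 < INR 'C(n, k).
  by apply/lt_0_INR/ssrnat.ltP; rewrite bin_gt0.
have C1 : INR 'C(n - s, k) <= INR 'C(n, k).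
  by apply/le_INR/ssrnat.leP/leq_bin2l/leq_subr.
rewrite /miss_prob; split.
  by apply: Rmult_le_pos; [exact: pos_INR | exact/Rlt_le/Rinv_0_lt_compat].
apply: (Rmult_le_reg_r (INR 'C(n, k))) => //.
by rewrite /Rdiv Rmult_assoc Rinv_l ?Rmult_1_r ?Rmult_1_l //; lra.
Qed.

Lemma INR_expn a b : INR (a ^ b)%N = INR a ^ b.
Proof. by elim: b => [|b IH] //; rewrite expnS mult_INR IH. Qed.

Lemma exp_mono x y : x <= y -> exp x <= exp y.
Proof. by case/Rle_lt_or_eq => [/exp_increasing/Rlt_le|->] //; apply: Rle_refl. Qed.

Lemma exp_mul_INR (ell : R) (j : nat) : exp (ell * INR j) = exp ell ^ j.
Proof.
elim: j => [|j IH]; first by rewrite /= Rmult_0_r exp_0.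
by rewrite S_INR Rmult_plus_distr_l Rmult_1_r exp_plus IH /= Rmult_comm.
Qed.

(* Exponential moment of m_S: the m clauses are independent, and each one
   misses S for exactly #(k-clauses missing S) of the #(k-clauses) choices. *)
Lemma mgf_mS n m k (S : {set 'I_n}) (lam : R) :
  (\sum_(w : outcome n m | valid k w) lam ^+ mS w S =
   (#|[set c : clause n | #|c.1| == k]|%:R +
    #|[set c : clause n | (#|c.1| == k) && misses c S]|%:R * (lam - 1)) ^+ m)%R.
Proof.
by rewrite !cardsE -sum_weight_split -sum_pow_count.
Qed.

(* Markov's inequality for [exp (ell * m_S)], evaluated with [mgf_mS]. *)
Lemma exp_moment_markov n m k (S : {set 'I_n}) (E : pred (outcome n m)) (ell x : R) :
  (forall w, valid k w -> E w -> ell * x <= ell * INR (mS w S)) ->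
  INR #|[set w | valid k w && E w]| * exp (ell * x) <=
  (INR #|[set c : clause n | #|c.1| == k]| +
   INR #|[set c : clause n | (#|c.1| == k) && misses c S]| * (exp ell - 1)) ^ m.
Proof.
move=> HE; rewrite !INRE RpowE; apply/RleP; rewrite -mgf_mS.
apply: le_trans (markov_count _ (fun w => valid k w) E
                   (fun w => exp (ell * INR (mS w S))) _ _ _) _.
- by move=> w _; apply/RleP/Rlt_le/exp_pos.
- by move=> w Vw Ew; apply/RleP/exp_mono; apply: HE.
- rewrite le_eqVlt; apply/orP; left; apply/eqP.
  by apply: eq_bigr => w _; rewrite exp_mul_INR RpowE.
Qed.

(* Chernoff's bound for m_S, for an arbitrary exponent [ell] and any event
   [E] on which [ell * m_S >= ell * x]; uses [1 + a <= exp a]. *)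
Lemma chernoff_count n m k (S : {set 'I_n}) (E : pred (outcome n m)) (ell x : R) :
  (k <= n)%N ->
  (forall w, valid k w -> E w -> ell * x <= ell * INR (mS w S)) ->
  INR #|[set w | valid k w && E w]| <=
  INR #|[set w : outcome n m | valid k w]| *
    exp (miss_prob n k #|S| * INR m * (exp ell - 1) - ell * x).
Proof.
move=> kn HE; have [q0 q1] := miss_prob_bounds n k #|S| kn.
set q := miss_prob n k #|S| in q0 q1 *.
set N := INR ('C(n, k) * 2 ^ n).
have N0 : 0 < N.
  rewrite /N mult_INR; apply: Rmult_lt_0_compat; apply/lt_0_INR/ssrnat.ltP.
    by rewrite bin_gt0.
  by rewrite expn_gt0.
have markov := exp_moment_markov n m k S E ell x HE.
rewrite card_kclauses card_kclauses_missing -/N in markov.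
have Nq : INR ('C(n - #|S|, k) * 2 ^ n) = N * q.
  rewrite /N /q /miss_prob !mult_INR; field.
  by apply/not_0_INR/eqP; rewrite -lt0n bin_gt0.
rewrite Nq in markov.
have power : (N + N * q * (exp ell - 1)) ^ m <=
             N ^ m * exp (q * INR m * (exp ell - 1)).
  have -> : N + N * q * (exp ell - 1) = N * (1 + q * (exp ell - 1)) by ring.
  rewrite Rpow_mult_distr; apply: Rmult_le_compat_l; first exact/pow_le/Rlt_le.
  have -> : q * INR m * (exp ell - 1) = q * (exp ell - 1) * INR m by ring.
  rewrite exp_mul_INR; apply: pow_incr; split; last exact: exp_ineq1_le.
  by have := exp_pos ell; nra.
rewrite card_valid INR_expn -/N /Rminus exp_plus exp_Ropp -Rmult_assoc.
apply: (Rmult_le_reg_r (exp (ell * x))); first exact: exp_pos.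
rewrite Rmult_assoc Rinv_l ?Rmult_1_r; last exact/Rgt_not_eq/exp_pos.
exact: Rle_trans markov power.
Qed.

(* Lower bound on the logarithm, from [1 + y <= exp y] at [y = ln (1/x)]. *)
Lemma ln_lower x : 0 < x -> 1 - / x <= ln x.
Proof.
move=> x0; have := exp_ineq1_le (ln (/ x)).
by rewrite exp_ln ?ln_Rinv //; [lra | exact: Rinv_0_lt_compat].
Qed.

(* Optimised Chernoff exponents: with [ell = ln (1 + eta/2)] (upper tail)
   and [ell = ln (1 - eta/2)] (lower tail) the exponent of
   [chernoff_count] at [x = (1 +- eta) mu] is at most [- eta^2 mu / 6]. *)
Lemma upper_exponent (mu eta : R) : 0 <= mu -> 0 < eta <= 1 ->
  mu * (eta / 2) - ln (1 + eta / 2) * ((1 + eta) * mu) <= - (eta ^ 2 / 6) * mu.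
Proof.
move=> mu0 [e0 e1]; set r := eta / (2 + eta).
have r_ln : r <= ln (1 + eta / 2).
  have -> : r = 1 - / (1 + eta / 2) by rewrite /r; field; lra.
  by apply: ln_lower; lra.
have r_lo : eta / 2 + eta ^ 2 / 6 <= (1 + eta) * r.
  have re : r * (2 + eta) = eta by rewrite /r; field; lra.
  apply: (Rmult_le_reg_r (2 + eta)); first lra.
  rewrite Rmult_assoc re; nra.
have := Rmult_le_compat_l _ _ _ mu0 r_lo.
have := Rmult_le_compat_l ((1 + eta) * mu) _ _ ltac:(nra) r_ln.
nra.
Qed.

Lemma lower_exponent (mu eta : R) : 0 <= mu -> 0 < eta <= 1 ->
  mu * (- (eta / 2)) - ln (1 - eta / 2) * ((1 - eta) * mu) <= - (eta ^ 2 / 6) * mu.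
Proof.
move=> mu0 [e0 e1]; set r := eta / (2 - eta).
have r_ln : - r <= ln (1 - eta / 2).
  have -> : - r = 1 - / (1 - eta / 2) by rewrite /r; field; lra.
  by apply: ln_lower; lra.
have r_hi : (1 - eta) * r <= eta / 2 - eta ^ 2 / 6.
  have re : r * (2 - eta) = eta by rewrite /r; field; lra.
  apply: (Rmult_le_reg_r (2 - eta)); first lra.
  rewrite Rmult_assoc re; nra.
have := Rmult_le_compat_l _ _ _ mu0 r_hi.
have := Rmult_le_compat_l ((1 - eta) * mu) _ _ ltac:(nra) r_ln.
nra.
Qed.

Section Tails.
Variables (n m k : nat) (S : {set 'I_n}) (eta : R).
Hypotheses (kn : (k <= n)%N) (eta_pos : 0 < eta) (eta_le1 : eta <= 1).

Let mu := miss_prob n k #|S| * INR m.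

Let mu_ge0 : 0 <= mu.
Proof. by apply: Rmult_le_pos; [case: (miss_prob_bounds n k #|S| kn) | apply: pos_INR]. Qed.

Let V := INR #|[set w : outcome n m | valid k w]|.

Lemma upper_tail :
  INR #|[set w : outcome n m | valid k w && Rleb ((1 + eta) * mu) (INR (mS w S))]| <=
  V * exp (- (eta ^ 2 / 6) * mu).
Proof.
apply: Rle_trans (chernoff_count n m k S
    (fun w => Rleb ((1 + eta) * mu) (INR (mS w S)))
    (ln (1 + eta / 2)) ((1 + eta) * mu) kn _) _.
  move=> w _ /RlebP; apply: Rmult_le_compat_l.
  by rewrite -ln_1; apply/Rlt_le/ln_increasing; lra.
apply/Rmult_le_compat_l/exp_mono; first exact: pos_INR.
rewrite exp_ln; last lra.
have := upper_exponent _ _ mu_ge0 (conj eta_pos eta_le1); rewrite /mu; lra.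
Qed.

Lemma lower_tail :
  INR #|[set w : outcome n m | valid k w && Rleb (INR (mS w S)) ((1 - eta) * mu)]| <=
  V * exp (- (eta ^ 2 / 6) * mu).
Proof.
apply: Rle_trans (chernoff_count n m k S
    (fun w => Rleb (INR (mS w S)) ((1 - eta) * mu))
    (ln (1 - eta / 2)) ((1 - eta) * mu) kn _) _.
  move=> w _ /RlebP; apply: Rmult_le_compat_neg_l.
  by rewrite -ln_1; apply/Rlt_le/ln_increasing; lra.
apply/Rmult_le_compat_l/exp_mono; first exact: pos_INR.
rewrite exp_ln; last lra.
have := lower_exponent _ _ mu_ge0 (conj eta_pos eta_le1); rewrite /mu; lra.
Qed.

End Tails.

Lemma close_of_not_tails (x mu P eta zeta : R) :
  0 < eta <= 1/3 -> 3 * eta <= zeta -> Rabs (mu - P) <= eta * P ->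
  ~ (1 + eta) * mu <= x -> ~ x <= (1 - eta) * mu ->
  Rabs (x - P) <= zeta * P.
Proof.
move=> [e0 e1] ez muP /Rnot_le_lt up /Rnot_le_lt lo.
have P0 : 0 <= P by have := Rabs_pos (mu - P); nra.
have := Rle_abs (mu - P); have := Rle_abs (- (mu - P)); rewrite Rabs_Ropp => ? ?.
apply: Rabs_le; split; nra.
Qed.

Lemma card_bigcup_le (I T : finType) (P : pred I) (A : I -> {set T}) :
  (#|\bigcup_(i | P i) A i| <= \sum_(i | P i) #|A i|)%N.
Proof.
elim/big_rec2: _ => [|i n U _ le]; first by rewrite cards0.
by rewrite (leq_trans (leq_card_setU _ _).1) ?leq_add2l.
Qed.

Lemma card_ksets_le n s : INR #|[pred S : {set 'I_n} | #|S| == s]| <= 2 ^ n.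
Proof.
have := le_INR _ _ (ssrnat.leP (max_card [pred S : {set 'I_n} | #|S| == s])).
by rewrite -cardsT -powersetT card_powerset cardsT card_ord INR_expn.
Qed.

Lemma good_event_RlebE x y : Defs.Rleb x y = Rleb x y.
Proof. by apply/idP/RlebP; rewrite /Defs.Rleb; case: Rle_dec. Qed.

Section UnionBound.
Variables (n m k s : nat) (p zeta eta : R).
Hypotheses (kn : (k <= n)%N) (eta_bounds : 0 < eta <= 1/3) (zeta_ge : 3 * eta <= zeta).

Let mu := miss_prob n k s * INR m.
Let P := p ^ k * INR m.
Hypothesis mean_close : Rabs (mu - P) <= eta * P.

Let V := INR #|[set w : outcome n m | valid k w]|.

Let deviation (S : {set 'I_n}) : {set outcome n m} :=
  [set w | valid k w && Rleb ((1 + eta) * mu) (INR (mS w S))] :|: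
  [set w | valid k w && Rleb (INR (mS w S)) ((1 - eta) * mu)].

Lemma bad_sub_deviations :
  [set w : outcome n m | valid k w && ~~ good_event n m k s p zeta w]
  \subset \bigcup_(S : {set 'I_n} | #|S| == s) deviation S.
Proof.
apply/subsetP => w; rewrite inE => /andP[Vw /forallPn[S]].
rewrite negb_imply good_event_RlebE => /andP[HS /RlebP bad]; apply/bigcupP; exists S => //.
rewrite !inE Vw /=; apply/negPn/negP; rewrite negb_or => /andP[/RlebP up /RlebP lo].
exact: bad (close_of_not_tails _ _ _ _ _ eta_bounds zeta_ge mean_close up lo).
Qed.

Lemma card_deviation (S : {set 'I_n}) : #|S| = s ->
  INR #|deviation S| <= 2 * (V * exp (- (eta ^ 2 / 6) * mu)).
Proof.
move=> HS; have eta1 : eta <= 1 by case: eta_bounds => _; lra.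
have eta0 : 0 < eta by case: eta_bounds.
apply: Rle_trans (le_INR _ _ (ssrnat.leP (leq_card_setU _ _).1)) _.
have := upper_tail n m k S eta kn eta0 eta1.
have := lower_tail n m k S eta kn eta0 eta1.
by rewrite plus_INR HS -/mu -/V; lra.
Qed.

Lemma bad_event_bound :
  INR #|[set w : outcome n m | valid k w && ~~ good_event n m k s p zeta w]| <=
  2 * 2 ^ n * (V * exp (- (eta ^ 2 / 6) * mu)).
Proof.
set c := 2 * (V * exp (- (eta ^ 2 / 6) * mu)).
have c0 : 0 <= c.
  by apply: Rmult_le_pos; [lra | apply/Rmult_le_pos/Rlt_le/exp_pos/pos_INR].
have cnt := leq_trans (subset_leq_card bad_sub_deviations) (card_bigcup_le _ _ _ _).
apply: Rle_trans (le_INR _ _ (ssrnat.leP cnt)) _.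
have sum_le : (\sum_(S : {set 'I_n} | #|S| == s) #|deviation S|%:R <=
               \sum_(S : {set 'I_n} | #|S| == s) c)%R.
  by apply: ler_sum => S /eqP HS; apply/RleP; rewrite -INRE; apply: card_deviation.
rewrite INRE natr_sum; apply/RleP; apply: le_trans sum_le _; apply/RleP.
rewrite sumr_const -mulr_natr -INRE.
apply: Rle_trans (Rmult_le_compat_l _ _ _ c0 (card_ksets_le n s)) _.
by apply: Req_le; rewrite /c; ring.
Qed.

End UnionBound.

Section BinomialRatio.
Variables (n t k : nat).
Hypotheses (n_pos : (0 < n)%N) (t_le_n : (t <= n)%N) (k_le_t : (k <= t)%N).

Let N := INR n.
Let T := INR t.
Let K := INR k.

Lemma falling_factor_bounds (j : nat) : (j < k)%N ->
  (T - K) / N * (N - INR j) <= T - INR j <= T / N * (N - INR j).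
Proof.
move=> jk; have N0 : 0 < N by apply/lt_0_INR/ssrnat.ltP.
have tnR : T <= N by apply/le_INR/ssrnat.leP.
have jkR : INR j <= K by apply/le_INR/ssrnat.leP/ltnW.
have ktR : K <= T by apply/le_INR/ssrnat.leP.
have j0 := pos_INR j.
split.
  apply: (Rmult_le_reg_r N) => //.
  have -> : (T - K) / N * (N - INR j) * N = (T - K) * (N - INR j) by field; lra.
  have := Rmult_le_pos (K - INR j) (N - T) ltac:(lra) ltac:(lra).
  have := Rmult_le_pos K (T - INR j) ltac:(lra) ltac:(lra).
  lra.
apply: (Rmult_le_reg_r N) => //.
have -> : T / N * (N - INR j) * N = T * (N - INR j) by field; lra.
have := Rmult_le_pos (INR j) (N - T) ltac:(lra) ltac:(lra).
lra.
Qed.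

Lemma falling_ratio_bounds (j : nat) : (j <= k)%N ->
  ((T - K) / N) ^ j * INR (n ^_ j) <= INR (t ^_ j) <= (T / N) ^ j * INR (n ^_ j).
Proof.
have N0 : 0 < N by apply/lt_0_INR/ssrnat.ltP.
have ktR : K <= T by apply/le_INR/ssrnat.leP.
have L0 : 0 <= (T - K) / N.
  by apply: Rmult_le_pos; [lra | exact/Rlt_le/Rinv_0_lt_compat].
have U0 : 0 <= T / N by apply: Rmult_le_pos; [apply: pos_INR | exact/Rlt_le/Rinv_0_lt_compat].
elim: j => [|j IH] jk; first by rewrite /= !Rmult_1_l; split; apply: Rle_refl.
have jt : (j <= t)%N by apply: leq_trans (ltnW jk) k_le_t.
have jn : (j <= n)%N by apply: leq_trans jt t_le_n.
have [lo hi] := IH (ltnW jk); have [flo fhi] := falling_factor_bounds j jk.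
have F0 := pos_INR (n ^_ j).
have jtR : INR j <= T by apply/le_INR/ssrnat.leP.
have jnR : INR j <= N by apply/le_INR/ssrnat.leP.
rewrite !ffactnSr !mult_INR !minus_INR -/N -/T; try exact/ssrnat.leP.
split.
- have -> : ((T - K) / N) ^ j.+1 * (INR (n ^_ j) * (N - INR j)) =
            (((T - K) / N) ^ j * INR (n ^_ j)) * ((T - K) / N * (N - INR j)).
    by rewrite /=; ring.
  apply: Rmult_le_compat => //.
    by apply: Rmult_le_pos => //; exact: pow_le.
  by apply: Rmult_le_pos => //; lra.
- have -> : (T / N) ^ j.+1 * (INR (n ^_ j) * (N - INR j)) =
            ((T / N) ^ j * INR (n ^_ j)) * (T / N * (N - INR j)) by rewrite /=; ring.
  by apply: Rmult_le_compat => //; [exact: pos_INR | lra].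
Qed.

Lemma binomial_ratio_bounds :
  ((T - K) / N) ^ k <= INR 'C(t, k) / INR 'C(n, k) <= (T / N) ^ k.
Proof.
have [lo hi] := falling_ratio_bounds k (leqnn k).
have kn : (k <= n)%N by apply: leq_trans k_le_t t_le_n.
have Fn : 0 < INR (n ^_ k) by apply/lt_0_INR/ssrnat.ltP; rewrite ffact_gt0.
have Kf : 0 < INR k`! by apply/lt_0_INR/ssrnat.ltP/fact_gt0.
have -> : INR 'C(t, k) / INR 'C(n, k) = INR (t ^_ k) / INR (n ^_ k).
  rewrite -!bin_ffact !mult_INR; field; split; first lra.
  by apply/not_0_INR/eqP; rewrite -lt0n bin_gt0.
split; apply: (Rmult_le_reg_r (INR (n ^_ k))) => //;
  by rewrite /Rdiv Rmult_assoc Rinv_l; lra.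
Qed.

End BinomialRatio.

Lemma bernoulli_sub (x : R) (k : nat) : 0 <= x <= 1 -> 1 - INR k * x <= (1 - x) ^ k.
Proof.
move=> [x0 x1]; elim: k => [|k IH]; first by rewrite /=; lra.
rewrite S_INR /=.
have := Rmult_le_compat_l (1 - x) _ _ ltac:(lra) IH.
have := pos_INR k; nra.
Qed.

Lemma pow_one_plus_le (y : R) (k : nat) : 0 <= y -> INR k * y < 1 ->
  (1 + y) ^ k <= / (1 - INR k * y).
Proof.
move=> y0 ky; case: k ky => [|k] ky.
  by rewrite /= Rmult_0_l Rminus_0_r Rinv_1; apply: Rle_refl.
have y1 : y <= 1 by have := pos_INR k; rewrite S_INR in ky; nra.
have prod1 : (1 + y) ^ k.+1 * (1 - y) ^ k.+1 <= 1.
  rewrite -Rpow_mult_distr -{3}(pow1 k.+1); apply: pow_incr; split; nra.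
have := Rmult_le_compat_l _ _ _ (pow_le (1 + y) k.+1 ltac:(lra))
          (bernoulli_sub y k.+1 (conj y0 y1)).
move=> h; apply: (Rmult_le_reg_r (1 - INR k.+1 * y)); first lra.
rewrite Rinv_l; lra.
Qed.

Lemma INR_le_square (k : nat) : INR k <= INR k * INR k.
Proof.
case: k => [|k]; first by rewrite /=; lra.
by rewrite S_INR; have := pos_INR k; nra.
Qed.

Section MissProbEstimate.
Variables (n k s : nat) (p eta : R).
Hypotheses (p_bounds : 0 < p < 1) (n_pos : (0 < n)%N) (eta_bounds : 0 < eta <= 1).

Let N := INR n.
Let K := INR k.
Let T := INR (n - s).
Hypotheses (gap_lo : p * N <= T) (gap_hi : T < p * N + 1).
Hypothesis k_small : K * K <= eta / 2 * (p * N).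

Let N_pos : 0 < N. Proof. exact/lt_0_INR/ssrnat.ltP. Qed.
Let pN_pos : 0 < p * N. Proof. by apply: Rmult_lt_0_compat; lra. Qed.

Let x := K / (p * N).
Let x_bounds : 0 <= x <= eta / 2 /\ K * x <= eta / 2.
Proof.
have xpN : x * (p * N) = K by rewrite /x; field; lra.
have := INR_le_square k; have := pos_INR k; rewrite -/K => K0 KK.
have x0 : 0 <= x by rewrite /x; apply: Rmult_le_pos; [lra | exact/Rlt_le/Rinv_0_lt_compat].
split; first by split => //; nra.
by nra.
Qed.

Lemma k_le_gap : (k <= n - s)%N.
Proof.
apply/ssrnat.leP/INR_le; rewrite -/K -/T.
have := INR_le_square k; rewrite -/K; case: eta_bounds => _ e1; nra.
Qed.

(* Lower estimate via Bernoulli: (1 - k/(pn))^k >= 1 - k^2/(pn). *)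
Lemma miss_prob_lower : p ^ k * (1 - eta) <= miss_prob n k s.
Proof.
have [[x0 x1] Kx] := x_bounds.
have [lo _] := binomial_ratio_bounds n (n - s) k n_pos (leq_subr s n) k_le_gap.
apply: Rle_trans lo; rewrite -/N -/T -/K.
have base : p * (1 - x) <= (T - K) / N.
  apply: (Rmult_le_reg_r N) => //.
  have -> : (T - K) / N * N = T - K by field; lra.
  have -> : p * (1 - x) * N = p * N - K by rewrite /x; field; lra.
  lra.
apply: Rle_trans (pow_incr _ _ _ (conj _ base)); last by apply: Rmult_le_pos; lra.
rewrite Rpow_mult_distr; apply: Rmult_le_compat_l; first by apply: pow_le; lra.
have := bernoulli_sub x k ltac:(lra); rewrite -/K; lra.
Qed.

(* Upper estimate: (1 + 1/(pn))^k <= 1/(1 - k/(pn)) <= 1 + eta. *)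
Lemma miss_prob_upper : miss_prob n k s <= p ^ k * (1 + eta).
Proof.
have [[x0 x1] Kx] := x_bounds.
have [_ hi] := binomial_ratio_bounds n (n - s) k n_pos (leq_subr s n) k_le_gap.
apply: Rle_trans hi _; rewrite -/N -/T.
set y := / (p * N).
have y0 : 0 <= y by exact/Rlt_le/Rinv_0_lt_compat.
have base : T / N <= p * (1 + y).
  apply: (Rmult_le_reg_r N) => //.
  have -> : T / N * N = T by field; lra.
  have -> : p * (1 + y) * N = p * N + 1 by rewrite /y; field; lra.
  lra.
apply: Rle_trans (pow_incr _ _ _ (conj _ base)) _.
  by apply: Rmult_le_pos; [apply: pos_INR | exact/Rlt_le/Rinv_0_lt_compat].
rewrite Rpow_mult_distr; apply: Rmult_le_compat_l; first by apply: pow_le; lra.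
have Ky : INR k * y = x by [].
apply: Rle_trans (pow_one_plus_le y k y0 _) _; rewrite Ky; first lra.
apply: (Rmult_le_reg_r (1 - x)); first lra.
rewrite Rinv_l; last lra.
nra.
Qed.

End MissProbEstimate.

Lemma card_valid_pos n m k : (k <= n)%N ->
  0 < INR #|[set w : outcome n m | valid k w]|.
Proof.
move=> kn; rewrite card_valid INR_expn mult_INR; apply/pow_lt/Rmult_lt_0_compat.
- by apply/lt_0_INR/ssrnat.ltP; rewrite bin_gt0.
- by apply/lt_0_INR/ssrnat.ltP; rewrite expn_gt0.
Qed.

Lemma prob_complement n m k (E : pred (outcome n m)) : (k <= n)%N ->
  Rabs (Rprob n m k E - 1) =
  INR #|[set w : outcome n m | valid k w && ~~ E w]| /
  INR #|[set w : outcome n m | valid k w]|.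
Proof.
move=> kn; have V0 := card_valid_pos n m k kn.
set V := INR #|[set w : outcome n m | valid k w]| in V0 *.
have split_card : INR #|[set w : outcome n m | valid k w && E w]| +
                  INR #|[set w : outcome n m | valid k w && ~~ E w]| = V.
  rewrite /V -plus_INR -(cardsID [set w | E w] [set w : outcome n m | valid k w]).
  by congr (INR (_ + _)); apply: eq_card => w; rewrite !inE // andbC.
have -> : Rprob n m k E - 1 = - (INR #|[set w : outcome n m | valid k w && ~~ E w]| / V).
  by rewrite /Rprob -/V -split_card; field; lra.
rewrite Rabs_Ropp Rabs_right //; apply/Rle_ge/Rmult_le_pos; first exact: pos_INR.
exact/Rlt_le/Rinv_0_lt_compat.
Qed.
Lemma deviation_bound (n m k s : nat) (p zeta eta : R) :
  (0 < n)%N -> 0 < p < 1 ->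
  p * INR n <= INR (n - s) -> INR (n - s) < p * INR n + 1 ->
  0 < eta <= 1/3 -> 3 * eta <= zeta ->
  INR k * INR k <= eta / 2 * (p * INR n) ->
  Rabs (Rprob n m k (good_event n m k s p zeta) - 1) <=
  2 * 2 ^ n * exp (- (eta ^ 2 / 6 * (1 - eta)) * (p ^ k * INR m)).
Proof.
move=> n0 pp lo hi [e0 e1] ez kk.
have eta1 : 0 < eta <= 1 by lra.
have kn : (k <= n)%N.
  exact: leq_trans (k_le_gap n k s p eta pp n0 eta1 lo hi kk) (leq_subr s n).
have qlo := miss_prob_lower n k s p eta pp n0 eta1 lo hi kk.
have qhi := miss_prob_upper n k s p eta pp n0 eta1 lo hi kk.
set q := miss_prob n k s in qlo qhi *; set P := p ^ k * INR m.
have m0 := pos_INR m.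
have mean_close : Rabs (q * INR m - P) <= eta * P.
  have := Rmult_le_compat_r _ _ _ m0 qlo; have := Rmult_le_compat_r _ _ _ m0 qhi.
  by rewrite /P => ? ?; apply: Rabs_le; split; nra.
have bad := bad_event_bound n m k s p zeta eta kn (conj e0 e1) ez mean_close.
have V0 := card_valid_pos n m k kn.
have tail_exp : exp (- (eta ^ 2 / 6) * (q * INR m)) <=
                exp (- (eta ^ 2 / 6 * (1 - eta)) * P).
  apply: exp_mono; have := Rmult_le_compat_r _ _ _ m0 qlo.
  have := pow2_ge_0 eta; rewrite /P; nra.
set V := INR #|[set w : outcome n m | valid k w]| in bad V0 *.
rewrite prob_complement // -/V; apply: (Rmult_le_reg_r _ _ _ V0).
have -> : forall B, B / V * V = B by move=> B; field; lra.
apply: Rle_trans bad _; rewrite -/q.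
have scale : 0 <= 2 * 2 ^ n * V by have := pow_lt 2 n ltac:(lra); nra.
have := Rmult_le_compat_l _ _ _ scale tail_exp; lra.
Qed.

Lemma sfun_gap (delta : R) (n : nat) : 0 < delta < 1/2 ->
  (1/2 + delta) * INR n <= INR (n - sfun delta n) < (1/2 + delta) * INR n + 1.
Proof.
move=> [d0 d1]; have n0 := pos_INR n.
set r := (1/2 - delta) * INR n.
have r0 : 0 <= r by rewrite /r; nra.
have [b1 b2] := base_Int_part r.
have z0 : Z.le 0 (Int_part r).
  have : Z.lt (-1) (Int_part r) by apply: lt_IZR; lra.
  lia.
have sE : INR (sfun delta n) = IZR (Int_part r).
  by rewrite /sfun -/r INR_IZR_INZ Z2Nat.id.
have rE : r = (1/2 - delta) * INR n by [].
have sn : (sfun delta n <= n)%N by apply/ssrnat.leP/INR_le; rewrite sE; nra.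
by rewrite minus_INR ?sE; [split; lra | exact/ssrnat.leP].
Qed.

Lemma square_small_eventually (k : nat -> nat) (c : R) :
  Un_cv (fun n => INR (k n) / sqrt (INR n)) 0 -> 0 < c ->
  exists N, forall n, (N <= n)%N -> (0 < n)%N -> INR (k n) * INR (k n) <= c * INR n.
Proof.
move=> Hk c0; have [N HN] := Hk (Rmin 1 c) (Rmin_glb_lt _ _ _ Rlt_0_1 c0).
exists N => n Nn n0.
have := HN n (ssrnat.leP Nn); rewrite /R_dist /Rdist Rminus_0_r.
have N0 : 0 < INR n by apply/lt_0_INR/ssrnat.ltP.
have sq0 : 0 < sqrt (INR n) by apply: sqrt_lt_R0.
set r := INR (k n) / sqrt (INR n).
have r0 : 0 <= r by apply: Rmult_le_pos; [apply: pos_INR | exact/Rlt_le/Rinv_0_lt_compat].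
have kE : INR (k n) * INR (k n) = r * r * INR n.
  by rewrite /r -{3}(sqrt_sqrt (INR n)); [field | ]; lra.
have := Rmin_l 1 c; have := Rmin_r 1 c.
rewrite Rabs_right ?kE; last lra.
move=> ? ? ?; apply: Rmult_le_compat_r; [lra | nra].
Qed.

Lemma exp_bound_vanishes (a : nat -> R) (c : R) :
  cv_infty (fun n => a n / INR n) -> 0 < c ->
  Un_cv (fun n => 2 * 2 ^ n * exp (- c * a n)) 0.
Proof.
move=> Ha c0 eps eps0.
set A := Rmax 0 (ln (4 / eps)).
have A0 : 0 <= A by apply: Rmax_l.
have [N HN] := Ha ((ln 2 + A) / c).
exists (maxn N 1) => n; move/ssrnat.leP; rewrite geq_max => /andP[Nn n1].
have N0 : 0 < INR n by apply/lt_0_INR/ssrnat.ltP.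
have N1 : 1 <= INR n by rewrite -INR_1; apply/le_INR/ssrnat.leP.
have an : (ln 2 + A) * INR n < c * a n.
  have := HN n (ssrnat.leP Nn); move=> h.
  have := Rmult_lt_compat_r (c * INR n) _ _ ltac:(nra) h.
  have -> : (ln 2 + A) / c * (c * INR n) = (ln 2 + A) * INR n by field; lra.
  by have -> : a n / INR n * (c * INR n) = c * a n by field; lra.
have -> : 2 ^ n = exp (ln 2 * INR n) by rewrite exp_mul_INR exp_ln //; lra.
rewrite /R_dist /Rdist Rminus_0_r Rabs_right; last first.
  have := exp_pos (- c * a n); have := exp_pos (ln 2 * INR n).
  by move=> ? ?; apply/Rle_ge/Rmult_le_pos; [apply: Rmult_le_pos |]; lra.
rewrite Rmult_assoc -exp_plus.
have : exp (ln 2 * INR n + - c * a n) <= exp (- A) by apply: exp_mono; nra.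
have : exp (- A) <= eps / 4.
  apply: Rle_trans (exp_mono _ _ (Ropp_le_contravar _ _ (Rmax_r 0 (ln (4 / eps))))) _.
  rewrite exp_Ropp exp_ln; last by apply: Rdiv_lt_0_compat; lra.
  by apply: Req_le; field; lra.
lra.
Qed.

Lemma Un_cv_of_dominated (u b : nat -> R) (l : R) :
  (exists N, forall n, (N <= n)%N -> Rabs (u n - l) <= b n) ->
  Un_cv b 0 -> Un_cv u l.
Proof.
move=> [N HN] Hb eps eps0; have [M HM] := Hb eps eps0.
exists (maxn N M) => n /ssrnat.leP; rewrite geq_max => /andP[Nn Mn].
have := HM n (ssrnat.leP Mn); rewrite /R_dist /Rdist Rminus_0_r => h.
have := HN n Nn; have := Rle_abs (b n); rewrite /R_dist /Rdist; lra.
Qed.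

Theorem lemma3p1 (delta : R) (k m : nat -> nat) :
  0 < delta < 1/2 ->
  Un_cv (fun n => INR (k n) / sqrt (INR n)) 0 ->
  cv_infty (fun n => (1/2 + delta) ^ (k n) * INR (m n) / INR n) ->
  forall zeta : R, 0 < zeta ->
  Un_cv (fun n => Rprob n (m n) (k n)
           (good_event n (m n) (k n) (sfun delta n) (1/2 + delta) zeta)) 1.
Proof.
move=> delta_bounds Hk Hm zeta zeta0.
set p := 1/2 + delta.
have p_bounds : 0 < p < 1 by rewrite /p; lra.
set eta := Rmin zeta 1 / 3.
have eta_bounds : 0 < eta <= 1/3.
  by have := Rmin_r zeta 1; have := Rmin_glb_lt _ _ _ zeta0 Rlt_0_1; rewrite /eta; lra.
have eta_zeta : 3 * eta <= zeta by have := Rmin_l zeta 1; rewrite /eta; lra.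
have c_pos : 0 < eta ^ 2 / 6 * (1 - eta).
  by have := pow_lt eta 2 ltac:(lra); nra.
apply: (Un_cv_of_dominated _ _ _ _ (exp_bound_vanishes _ _ Hm c_pos)).
have [N HN] := square_small_eventually k (eta / 2 * p) Hk ltac:(nra).
exists (maxn N 1) => n; rewrite geq_max => /andP[Nn n_pos].
have [gap_lo gap_hi] := sfun_gap delta n delta_bounds.
apply: deviation_bound => //; rewrite -Rmult_assoc; exact: HN.
Qed.
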